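(* Let $H$ be the Torricelli trumpet of parameter $\beta>0$ (surface of revolution of $r(z)=z^{-\beta}$, $z\ge z_0$, with $r_0=r(z_0)$), with rotation function $\Delta\theta(\varphi_0)$. Let $\kappa(\varphi_0)=\Delta\theta'(\varphi_0)$ and $\omega(\varphi_0)=\frac{2+\kappa(\varphi_0)}{\cos\varphi_0}$. Then: 1. $\kappa$ is smooth on $(-\pi/2,\pi/2)\setminus\{0\}$, and for all such $\varphi_0$ $$\kappa(\varphi_0)\le-2\sqrt{1+\beta^{-2}r_0^{-2(1+\beta)/\beta}}<-2.$$ In particular $\kappa(\varphi_0)\notin[-2,0]$, and hence $\omega<0$. 2. $\kappa(\varphi_0)\to-\infty$ as $\varphi_0\to0$, and $\kappa(\varphi_0)\to-2\sqrt{1+\beta^{-2}r_0^{-2(1+\beta)/\beta}}$ as $\varphi_0\to\pm\pi/2$. 3. $|\kappa'(\varphi_0)|=O(|2+\kappa(\varphi_0)|^3)$ as $\varphi_0\to0$. 4. $\omega$ is monotone on one-sided neighborhoods $[-\varepsilon,0)$ and $(0,\varepsilon]$ of $0$, for some $\varepsilon>0$.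
   Context: The trumpet is the surface $(r(z)\cos\theta,r(z)\sin\theta,z)$, $z\ge z_0$. A unit-speed geodesic entering through the boundary circle at angular position $\theta_0$ with angle $\varphi_0$ to the inward meridian exits at position $\theta_0+\Delta\theta(\varphi_0)$. The rotation function $\Delta\theta(\varphi_0)=2\operatorname{sgn}(\varphi_0)\int_{|\sin\varphi_0|}^1\sqrt{\frac{1+r'(z(r_0|\sin\varphi_0|/u))^{-2}}{1-u^2}}\,du$ is odd in $\varphi_0$. *)

From Stdlib Require Import Reals.
From Coquelicot Require Import Coquelicot.
Open Scope R_scope.

(* Generic rotation function of a trumpet with profile r, given
   dr = r' (derivative of the profile) and zinv = z(.) the inverse of r,
   and r0 = r(z0).  The improper integral on [|sin phi|, 1) is Coquelicot's
   RInt_gen with the filter at_left 1. *)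
Definition rotation (dr zinv : R -> R) (r0 phi : R) : R :=
  2 * sign phi *
  RInt_gen
    (fun u => sqrt ((1 + / (dr (zinv (r0 * Rabs (sin phi) / u))) ^ 2) / (1 - u ^ 2)))
    (at_point (Rabs (sin phi))) (at_left 1).

Definition torr_r (beta z : R) : R := Rpower z (- beta).
Definition torr_zinv (beta rho : R) : R := Rpower rho (- / beta).

Definition torr_dtheta (beta z0 : R) : R -> R :=
  rotation (Derive (torr_r beta)) (torr_zinv beta) (torr_r beta z0).

Definition torr_kappa (beta z0 : R) : R -> R := Derive (torr_dtheta beta z0).

Definition torr_omega (beta z0 : R) (phi : R) : R :=
  (2 + torr_kappa beta z0 phi) / cos phi.

From Stdlib Require Import Reals Lra.
From Coquelicot Require Import Coquelicot.
Open Scope R_scope.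

(* For 0 < φ < π/2 the substitution u = sin t turns the improper
   rotation integral of the Torricelli trumpet into a proper one:
     Δθ(φ) = 2 Φ(φ),   Φ(φ) = ∫_φ^{π/2} sqrt (1 + X(φ,t)) dt,
     X(φ,t) = coef · (sin t / sin φ)^expo,   expo = 2(1+β)/β > 2,
   and Δθ is odd.  Differentiating under the integral sign (Leibniz rule with
   the moving bound φ) gives
     κ(φ) = -expo · cot φ · J(φ) - c,   c = 2 sqrt (1 + coef),
   with J(φ) = ∫_φ^{π/2} X/sqrt(1+X) dt ≥ 0, and κ is even.  Smoothness of κ
   comes from rescaling Φ to an integral over [0,1] of an elementary expression
   and differentiating repeatedly under the integral sign.  The four items then
   follow from elementary two-sided estimates J(φ) ≍ sqrt (Q φ), Q φ = sin φ^(-expo),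
   near φ = 0, and J = O(1), cot φ = O(π/2 - φ) near π/2. *)

(** * Elementary expressions in two variables *)

(* Expressions in a parameter [x] and an integration variable [t].  The class
   is closed under partial differentiation in [x], so repeated differentiation
   under the integral sign can be carried out symbolically. *)
Inductive expr : Type :=
  | ECst (c : R) | EX | ET
  | EAdd (e1 e2 : expr) | EMul (e1 e2 : expr) | EInv (e : expr)
  | ESqrt (e : expr) | ESin (e : expr) | ECos (e : expr) | EPow (e : expr) (c : R).

Fixpoint eval (e : expr) (x t : R) : R :=
  match e with
  | ECst c => c | EX => x | ET => t
  | EAdd e1 e2 => eval e1 x t + eval e2 x t
  | EMul e1 e2 => eval e1 x t * eval e2 x t
  | EInv e => / eval e x t
  | ESqrt e => sqrt (eval e x t)
  | ESin e => sin (eval e x t)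
  | ECos e => cos (eval e x t)
  | EPow e c => Rpower (eval e x t) c
  end.

Fixpoint defined (e : expr) (x t : R) : Prop :=
  match e with
  | ECst _ | EX | ET => True
  | EAdd e1 e2 | EMul e1 e2 => defined e1 x t /\ defined e2 x t
  | EInv e => defined e x t /\ eval e x t <> 0
  | ESqrt e | EPow e _ => defined e x t /\ 0 < eval e x t
  | ESin e | ECos e => defined e x t
  end.

Fixpoint deriv (e : expr) : expr :=
  match e with
  | ECst _ | ET => ECst 0
  | EX => ECst 1
  | EAdd e1 e2 => EAdd (deriv e1) (deriv e2)
  | EMul e1 e2 => EAdd (EMul (deriv e1) e2) (EMul e1 (deriv e2))
  | EInv e => EMul (ECst (-1)) (EMul (deriv e) (EInv (EMul e e)))
  | ESqrt e => EMul (deriv e) (EInv (EMul (ECst 2) (ESqrt e)))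
  | ESin e => EMul (deriv e) (ECos e)
  | ECos e => EMul (ECst (-1)) (EMul (deriv e) (ESin e))
  | EPow e c => EMul (ECst c) (EMul (deriv e) (EPow e (c - 1)))
  end.

Fixpoint deriv_n (n : nat) (e : expr) : expr :=
  match n with O => e | S n => deriv (deriv_n n e) end.

Fixpoint subst_t (e s : expr) : expr :=
  match e with
  | ET => s
  | EAdd e1 e2 => EAdd (subst_t e1 s) (subst_t e2 s)
  | EMul e1 e2 => EMul (subst_t e1 s) (subst_t e2 s)
  | EInv e => EInv (subst_t e s)
  | ESqrt e => ESqrt (subst_t e s)
  | ESin e => ESin (subst_t e s)
  | ECos e => ECos (subst_t e s)
  | EPow e c => EPow (subst_t e s) c
  | _ => e
  end.

Lemma eval_subst_t e s x t : eval (subst_t e s) x t = eval e x (eval s x t).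
Proof. induction e; simpl; congruence. Qed.

Lemma defined_subst_t e s x t :
  defined s x t -> defined e x (eval s x t) -> defined (subst_t e s) x t.
Proof. intros Hs. induction e; simpl; rewrite ?eval_subst_t; tauto. Qed.

Lemma defined_deriv e x t : defined e x t -> defined (deriv e) x t.
Proof.
  induction e; simpl; intros;
    repeat match goal with H : _ /\ _ |- _ => destruct H end;
    repeat split; auto;
    try apply Rmult_integral_contrapositive; try split; auto;
    try (apply Rgt_not_eq, sqrt_lt_R0; auto); lra.
Qed.

Lemma defined_deriv_n n e x t : defined e x t -> defined (deriv_n n e) x t.
Proof. induction n; simpl; auto using defined_deriv. Qed.

Lemma continuity_pt_Rpower y c : 0 < y -> continuity_pt (fun z => Rpower z c) y.
Proof.
  intros Hy. apply derivable_continuous_pt.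
  exists (c * Rpower y (c - 1)). now apply derivable_pt_lim_power.
Qed.

Lemma eval_continuous e x t : defined e x t -> continuity_2d_pt (eval e) x t.
Proof.
  induction e; simpl; intros He;
    repeat match goal with H : _ /\ _ |- _ => destruct H end.
  - apply continuity_2d_pt_const.
  - apply continuity_2d_pt_id1.
  - apply continuity_2d_pt_id2.
  - apply continuity_2d_pt_plus; auto.
  - apply continuity_2d_pt_mult; auto.
  - apply continuity_2d_pt_inv; auto.
  - apply continuity_1d_2d_pt_comp; auto. apply continuity_pt_sqrt; lra.
  - apply continuity_1d_2d_pt_comp; auto. apply continuity_sin.
  - apply continuity_1d_2d_pt_comp; auto. apply continuity_cos.
  - apply (continuity_1d_2d_pt_comp (fun z => Rpower z c)); auto.
    now apply continuity_pt_Rpower.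
Qed.

Lemma continuity_2d_pt_pos_locally f x t :
  continuity_2d_pt f x t -> 0 < f x t -> locally_2d (fun u v => 0 < f u v) x t.
Proof.
  intros Hc Hp. destruct (Hc (mkposreal _ Hp)) as [d Hd].
  exists d. intros u v Hu Hv. specialize (Hd u v Hu Hv). simpl in Hd.
  apply Rabs_def2 in Hd. lra.
Qed.

Lemma defined_locally e x t : defined e x t -> locally_2d (defined e) x t.
Proof.
  induction e; simpl; intros He;
    repeat match goal with H : _ /\ _ |- _ => destruct H end;
    try (apply locally_2d_forall; now simpl);
    try (apply locally_2d_and; auto);
    first [ apply continuity_2d_pt_neq_0 | apply continuity_2d_pt_pos_locally | idtac ];
    auto using eval_continuous.
Qed.

Lemma is_derive_Rpower_comp f x l c : is_derive f x l -> 0 < f x ->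
  is_derive (fun y => Rpower (f y) c) x (c * (l * Rpower (f x) (c - 1))).
Proof.
  intros Hf Hp.
  replace (c * (l * Rpower (f x) (c - 1))) with (l * (c * Rpower (f x) (c - 1))) by ring.
  apply (is_derive_comp (fun z => Rpower z c) f); auto.
  apply is_derive_Reals. now apply derivable_pt_lim_power.
Qed.

Lemma eval_is_derive e x t :
  defined e x t -> is_derive (fun z => eval e z t) x (eval (deriv e) x t).
Proof.
  induction e; simpl; intros He;
    repeat match goal with H : _ /\ _ |- _ => destruct H end.
  1-3: auto_derive; auto.
  - apply (is_derive_plus (fun z => eval e1 z t) (fun z => eval e2 z t)); auto.
  - apply (is_derive_mult (fun z => eval e1 z t) (fun z => eval e2 z t)); auto.
    intros; apply Rmult_comm.
  - evar (l : R). replace (-1 * (eval (deriv e) x t * / (eval e x t * eval e x t))) with l.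
    + apply (is_derive_inv (fun z => eval e z t)); auto.
    + unfold l; simpl; field; auto.
  - apply (is_derive_sqrt (fun z => eval e z t)); auto.
  - apply (is_derive_comp sin (fun z => eval e z t)); auto. apply is_derive_sin.
  - replace (-1 * (eval (deriv e) x t * sin (eval e x t)))
      with (eval (deriv e) x t * - sin (eval e x t)) by ring.
    apply (is_derive_comp cos (fun z => eval e z t)); auto. apply is_derive_cos.
  - apply (is_derive_Rpower_comp (fun z => eval e z t)); auto.
Qed.

(** * Integrals depending on a parameter *)

Lemma continuous_snd_of_2d f x t : continuity_2d_pt f x t -> continuous (fun z => f x z) t.
Proof.
  intros Hc. apply filterlim_locally. intros eps.
  destruct (Hc eps) as [d Hd]. exists d. intros y Hy.
  apply (Hd x y); [rewrite Rminus_eq_0, Rabs_R0; apply cond_pos | exact Hy].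
Qed.

Lemma continuous_fst_of_2d f x t : continuity_2d_pt f x t -> continuous (fun z => f z t) x.
Proof.
  intros Hc. apply filterlim_locally. intros eps.
  destruct (Hc eps) as [d Hd]. exists d. intros y Hy.
  apply (Hd y t); [exact Hy | rewrite Rminus_eq_0, Rabs_R0; apply cond_pos].
Qed.

Lemma locally_open_interval l r x : l < x < r -> locally x (fun y => l < y < r).
Proof.
  intros Hx. assert (Hp : 0 < Rmin (x - l) (r - x)) by (apply Rmin_pos; lra).
  exists (mkposreal _ Hp). intros y Hy. change (Rabs (y - x) < Rmin (x - l) (r - x)) in Hy.
  apply Rabs_def2 in Hy.
  generalize (Rmin_l (x - l) (r - x)) (Rmin_r (x - l) (r - x)). lra.
Qed.

Lemma locally_2d_open_box l r l' r' x t : l < x < r -> l' < t < r' ->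
  locally_2d (fun u v => l < u < r /\ l' < v < r') x t.
Proof.
  intros Hx Ht.
  set (m := Rmin (Rmin (x - l) (r - x)) (Rmin (t - l') (r' - t))).
  assert (Hp : 0 < m) by (repeat apply Rmin_pos; lra).
  exists (mkposreal _ Hp). intros u v Hu Hv. simpl in Hu, Hv.
  apply Rabs_def2 in Hu. apply Rabs_def2 in Hv.
  generalize (Rmin_l (Rmin (x - l) (r - x)) (Rmin (t - l') (r' - t)))
    (Rmin_r (Rmin (x - l) (r - x)) (Rmin (t - l') (r' - t)))
    (Rmin_l (x - l) (r - x)) (Rmin_r (x - l) (r - x))
    (Rmin_l (t - l') (r' - t)) (Rmin_r (t - l') (r' - t)). fold m. lra.
Qed.

Lemma ex_RInt_continuous_R (f : R -> R) c d :
  (forall z, Rmin c d <= z <= Rmax c d -> continuous f z) -> ex_RInt f c d.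
Proof. apply (ex_RInt_continuous (V := R_CompleteNormedModule)). Qed.

Lemma ex_RInt_eval e x c d :
  (forall t, Rmin c d <= t <= Rmax c d -> defined e x t) -> ex_RInt (eval e x) c d.
Proof.
  intros H. apply ex_RInt_continuous_R. intros z Hz.
  apply (continuous_snd_of_2d (eval e)), eval_continuous; auto.
Qed.

Section FixedBounds.
Variables (c d l r : R).
Hypothesis Hcd : c <= d.

Lemma is_derive_RInt_eval e x :
  (forall y t, l < y < r -> c <= t <= d -> defined e y t) -> l < x < r ->
  is_derive (fun z => RInt (eval e z) c d) x (RInt (eval (deriv e) x) c d).
Proof.
  intros Hdef Hx.
  assert (Hloc := locally_open_interval l r x Hx).
  replace (RInt (eval (deriv e) x) c d)
    with (RInt (fun t => Derive (fun u => eval e u t) x) c d).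
  - apply (is_derive_RInt_param (fun u t => eval e u t)).
    + generalize Hloc. apply filter_imp. intros y Hy t Ht.
      rewrite Rmin_left, Rmax_right in Ht by lra.
      eexists. apply eval_is_derive; auto.
    + intros t Ht. rewrite Rmin_left, Rmax_right in Ht by lra.
      apply continuity_2d_pt_ext_loc with (f := eval (deriv e)).
      * apply locally_2d_impl with (P := defined e).
        -- apply locally_2d_forall. intros u v Huv.
           symmetry; apply is_derive_unique, eval_is_derive; auto.
        -- apply defined_locally; auto.
      * apply eval_continuous, defined_deriv; auto.
    + generalize Hloc. apply filter_imp. intros y Hy.
      apply ex_RInt_eval. intros t Ht. rewrite Rmin_left, Rmax_right in Ht by lra. auto.
  - apply RInt_ext. intros t Ht. rewrite Rmin_left, Rmax_right in Ht by lra.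
    apply is_derive_unique, eval_is_derive. apply Hdef; lra.
Qed.

Lemma ex_derive_n_RInt_eval e :
  (forall y t, l < y < r -> c <= t <= d -> defined e y t) ->
  forall n x, l < x < r -> ex_derive_n (fun z => RInt (eval e z) c d) n x.
Proof.
  intros Hdef.
  assert (Hn : forall n x, l < x < r ->
    Derive_n (fun z => RInt (eval e z) c d) n x = RInt (eval (deriv_n n e) x) c d).
  { induction n as [|n IH]; intros x Hx; [reflexivity|]. simpl.
    rewrite (Derive_ext_loc _ (fun z => RInt (eval (deriv_n n e) z) c d)).
    - apply is_derive_unique, is_derive_RInt_eval; auto.
      intros; apply defined_deriv_n; auto.
    - generalize (locally_open_interval l r x Hx). apply filter_imp. auto. }
  intros [|n] x Hx; [exact I|]. simpl.
  apply ex_derive_ext_loc with (f := fun z => RInt (eval (deriv_n n e) z) c d).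
  - generalize (locally_open_interval l r x Hx). apply filter_imp.
    intros y Hy. symmetry; auto.
  - eexists. apply is_derive_RInt_eval; auto. intros; apply defined_deriv_n; auto.
Qed.

End FixedBounds.

Lemma is_derive_RInt_eval_lower e de l r x B : l < x < B -> B < r ->
  (forall u v, l < u < r -> l < v < r ->
     defined e u v /\ defined de u v /\ eval (deriv e) u v = eval de u v) ->
  is_derive (fun z => RInt (eval e z) z B) x (RInt (eval de x) x B - eval e x x).
Proof.
  intros Hx HB Hdef.
  assert (HDer : forall u v, l < u < r -> l < v < r ->
    Derive (fun z => eval e z v) u = eval de u v).
  { intros u v Hu Hv. destruct (Hdef u v Hu Hv) as [H1 [_ <-]].
    apply is_derive_unique, eval_is_derive; auto. }
  assert (HC : forall u v, l < u < r -> l < v < r ->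
    continuity_2d_pt (fun u v => Derive (fun z => eval e z v) u) u v).
  { intros u v Hu Hv. apply continuity_2d_pt_ext_loc with (f := eval de).
    - apply locally_2d_impl with (P := fun u v => l < u < r /\ l < v < r).
      + apply locally_2d_forall. intros u' v' [H1 H2]. symmetry; auto.
      + apply locally_2d_open_box; auto.
    - apply eval_continuous, Hdef; auto. }
  assert (Hcont : forall u v, l < u < r -> l < v < r -> continuous (eval e u) v).
  { intros u v Hu Hv. apply (continuous_snd_of_2d (eval e)), eval_continuous, Hdef; auto. }
  set (eps := Rmin ((x - l) / 2) ((r - B) / 2)).
  assert (Heps : 0 < eps) by (apply Rmin_pos; lra).
  assert (He1 : eps <= (x - l) / 2) by apply Rmin_l.
  assert (He2 : eps <= (r - B) / 2) by apply Rmin_r.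
  set (pe := mkposreal eps Heps).
  assert (Hloc : locally x (fun y => x - eps < y < x + eps))
    by (apply locally_open_interval; lra).
  replace (RInt (eval de x) x B - eval e x x) with
    (RInt (fun t => Derive (fun u => eval e u t) x) x B + - eval e x x * 1).
  - apply (is_derive_RInt_param_bound_comp_aux2 (fun u t => eval e u t) (fun z => z) B x 1).
    + generalize Hloc. apply filter_imp. intros y Hy. apply ex_RInt_continuous_R.
      intros z Hz. rewrite Rmin_left, Rmax_right in Hz by lra. apply Hcont; lra.
    + exists pe. generalize Hloc. apply filter_imp. intros y Hy. apply ex_RInt_continuous_R.
      intros z Hz. simpl in Hz. rewrite Rmin_left, Rmax_right in Hz by lra. apply Hcont; lra.
    + auto_derive; auto.
    + exists pe. generalize Hloc. apply filter_imp. intros y Hy t Ht. simpl in Ht.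
      assert (l < Rmin (x - pe) B) by (apply Rmin_glb_lt; simpl; lra).
      assert (Rmax (x + pe) B < r) by (apply Rmax_lub_lt; simpl; lra).
      eexists. apply eval_is_derive, Hdef; simpl in *; lra.
    + intros t Ht. rewrite Rmin_left, Rmax_right in Ht by lra. apply HC; lra.
    + apply locally_2d_impl with (P := fun u v => l < u < r /\ l < v < r).
      * apply locally_2d_forall. intros u v [H1 H2]. apply HC; auto.
      * apply locally_2d_open_box; lra.
    + apply continuity_pt_filterlim, Hcont; lra.
  - rewrite Rmult_1_r. apply Rplus_eq_compat_r, RInt_ext. intros t Ht.
    rewrite Rmin_left, Rmax_right in Ht by lra. apply HDer; lra.
Qed.

Lemma RInt_bounds (f : R -> R) c d m M : c <= d -> ex_RInt f c d ->
  (forall t, c < t < d -> m <= f t <= M) -> (d - c) * m <= RInt f c d <= (d - c) * M.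
Proof.
  intros Hcd Hex Hb.
  replace ((d - c) * m) with (RInt (fun _ => m) c d) by (rewrite RInt_const; reflexivity).
  replace ((d - c) * M) with (RInt (fun _ => M) c d) by (rewrite RInt_const; reflexivity).
  split; apply RInt_le; auto using ex_RInt_const; intros t Ht; apply Hb; auto.
Qed.

Lemma is_derive_odd (f : R -> R) x l :
  (forall y, f (- y) = - f y) -> is_derive f x l -> is_derive f (- x) l.
Proof.
  intros Hodd Hf.
  apply is_derive_ext with (f := fun y => - f (- y)).
  - intros y. now rewrite Hodd, Ropp_involutive.
  - replace l with (- (-1 * l)) by ring.
    apply (is_derive_opp (fun y => f (- y))), (is_derive_comp f (fun y => - y)).
    + now rewrite Ropp_involutive.
    + auto_derive; auto.
Qed.

Lemma Rpower_pos x y : 0 < Rpower x y.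
Proof. apply exp_pos. Qed.

Lemma Rpower_base_1 y : Rpower 1 y = 1.
Proof. unfold Rpower. rewrite ln_1, Rmult_0_r. apply exp_0. Qed.

Lemma Rpower_minus_1 q c : 0 < q -> Rpower q (c - 1) = Rpower q c / q.
Proof.
  intros Hq. unfold Rminus. rewrite Rpower_plus, Rpower_Ropp, Rpower_1 by auto.
  reflexivity.
Qed.

Lemma Rpower_inv_base y c : 0 < y -> Rpower (/ y) c = Rpower y (- c).
Proof. intros H. unfold Rpower. rewrite ln_Rinv by auto. f_equal. ring. Qed.

Lemma le_sqrt_of_sq k A : 0 <= k -> k * k <= A -> k <= sqrt A.
Proof. intros Hk H. rewrite <- (sqrt_square k) by auto. now apply sqrt_le_1_alt. Qed.

Lemma sqrt_le_of_sq k A : 0 <= k -> A <= k * k -> sqrt A <= k.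
Proof. intros Hk H. rewrite <- (sqrt_square k) by auto. now apply sqrt_le_1_alt. Qed.

Lemma sqrt_div_square A c : 0 <= A -> 0 < c -> sqrt (A * / (c * c)) = sqrt A / c.
Proof.
  intros HA Hc. rewrite sqrt_mult_alt, sqrt_inv, sqrt_square by lra. reflexivity.
Qed.

Lemma sin_lt_1 y : 0 < y < PI / 2 -> sin y < 1.
Proof. intros H. rewrite <- sin_PI2. apply sin_increasing_1; lra. Qed.

Lemma sin_ge_half y : PI / 6 <= y <= PI / 2 -> / 2 <= sin y.
Proof.
  intros H. replace (/ 2) with (sin (PI / 6)) by (rewrite sin_PI6; field).
  apply sin_incr_1; lra.
Qed.


Lemma shape_l_le_k X : 0 < X ->
  0 <= X * (2 + X) / (2 * (1 + X) * sqrt (1 + X)) <= X / sqrt (1 + X).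
Proof.
  intros HX. assert (Hs : 0 < sqrt (1 + X)) by (apply sqrt_lt_R0; lra).
  split.
  - apply Rdiv_le_0_compat; nra.
  - replace (X * (2 + X) / (2 * (1 + X) * sqrt (1 + X)))
      with (X / sqrt (1 + X) * ((2 + X) / (2 * (1 + X)))) by (field; lra).
    rewrite <- (Rmult_1_r (X / sqrt (1 + X))) at 2.
    apply Rmult_le_compat_l; [apply Rdiv_le_0_compat; lra|].
    apply Rmult_le_reg_r with (2 * (1 + X)); [lra|].
    unfold Rdiv. rewrite Rmult_assoc, Rinv_l; lra.
Qed.

Lemma shape_k_bounds X : 0 < X -> 0 <= X / sqrt (1 + X) <= sqrt X.
Proof.
  intros HX. assert (Hs : 0 < sqrt (1 + X)) by (apply sqrt_lt_R0; lra).
  assert (Hss : sqrt (1 + X) * sqrt (1 + X) = 1 + X) by (apply sqrt_sqrt; lra).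
  set (S := sqrt (1 + X)) in *.
  assert (Hk : 0 <= X / S) by (apply Rdiv_le_0_compat; lra).
  split; auto. apply le_sqrt_of_sq; auto.
  replace (X / S * (X / S)) with (X * X / (1 + X))
    by (unfold Rdiv; rewrite <- Hss; field; lra).
  apply Rmult_le_reg_r with (1 + X); [lra|].
  unfold Rdiv. rewrite Rmult_assoc, Rinv_l by lra. nra.
Qed.

Lemma shape_k_lower m X : 1 <= m <= X -> sqrt (m / 2) <= X / sqrt (1 + X).
Proof.
  intros Hm. assert (Hs : 0 < sqrt (1 + X)) by (apply sqrt_lt_R0; lra).
  assert (Hss : sqrt (1 + X) * sqrt (1 + X) = 1 + X) by (apply sqrt_sqrt; lra).
  set (S := sqrt (1 + X)) in *.
  apply sqrt_le_of_sq; [apply Rdiv_le_0_compat; lra|].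
  replace (X / S * (X / S)) with (X * X / (1 + X))
    by (unfold Rdiv; rewrite <- Hss; field; lra).
  apply Rmult_le_reg_r with (1 + X); [lra|].
  replace (X * X / (1 + X) * (1 + X)) with (X * X) by (field; lra). nra.
Qed.
(** * The Torricelli trumpet *)

Section Torricelli.
Variable beta z0 : R.
Hypothesis hbeta : 0 < beta.

Definition r0 := torr_r beta z0.

(* For the Torricelli profile, 1/r'(z)^2 evaluated at the height of radius
   r0·sin φ/u equals coef·(u/sin φ)^expo. *)
Definition expo := 2 * (1 + beta) / beta.
Definition coef := / beta ^ 2 * Rpower r0 (- expo).
Definition c_lim := 2 * sqrt (1 + coef).

Lemma expo_gt_2 : 2 < expo.
Proof. unfold expo. apply Rmult_lt_reg_r with beta; auto. field_simplify; lra. Qed.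

Lemma coef_pos : 0 < coef.
Proof.
  apply Rmult_lt_0_compat; [apply Rinv_0_lt_compat, pow_lt; auto | apply Rpower_pos].
Qed.

Lemma c_lim_gt_2 : 2 < c_lim.
Proof.
  unfold c_lim. assert (sqrt 1 < sqrt (1 + coef)).
  { apply sqrt_lt_1_alt. generalize coef_pos; lra. }
  rewrite sqrt_1 in *. lra.
Qed.

(* After the substitution u = sin t, the rotation integrand becomes
   g = sqrt (1 + X) with X(φ, t) = coef·(sin t / sin φ)^expo.  We also need
   k = X / sqrt (1 + X) and l = X (2 + X) / (2 (1 + X) sqrt (1 + X)), which
   arise when differentiating g and k in φ. *)
Definition eX := EMul (ECst coef) (EPow (EMul (ESin ET) (EInv (ESin EX))) expo).
Definition e1X := EAdd (ECst 1) eX.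
Definition eg := ESqrt e1X.
Definition ek := EMul eX (EInv (ESqrt e1X)).
Definition el :=
  EMul (EMul eX (EAdd (ECst 2) eX)) (EInv (EMul (EMul (ECst 2) e1X) (ESqrt e1X))).
Definition ecot := EMul (ECos EX) (EInv (ESin EX)).
Definition edg := EMul (ECst (- (expo / 2))) (EMul ecot ek).
Definition edk := EMul (ECst (- expo)) (EMul ecot el).

Definition Xf x t := eval eX x t.

Lemma Xf_eq x t : Xf x t = coef * Rpower (sin t / sin x) expo.
Proof. reflexivity. Qed.

Lemma Xf_pos x t : 0 < Xf x t.
Proof. apply Rmult_lt_0_compat; [apply coef_pos | apply Rpower_pos]. Qed.

Lemma Xf_diag x : 0 < sin x -> Xf x x = coef.
Proof. intros H. rewrite Xf_eq. unfold Rdiv. rewrite Rinv_r, Rpower_base_1 by lra. ring. Qed.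

Definition admissible u v := 0 < sin u /\ 0 < sin v.

Lemma admissible_of u v : 0 < u < PI -> 0 < v < PI -> admissible u v.
Proof. intros; split; apply sin_gt_0; lra. Qed.

Lemma integrands_defined u v : admissible u v ->
  defined eg u v /\ defined ek u v /\ defined el u v /\ defined edg u v /\ defined edk u v.
Proof.
  intros [Hu Hv].
  assert (HX := Xf_pos u v).
  assert (Hs : 0 < sqrt (1 + Xf u v)) by (apply sqrt_lt_R0; lra).
  unfold Xf in *.
  unfold edg, edk, ecot, eg, ek, el, e1X, eX in *; simpl in *.
  repeat split; try lra;
    repeat apply Rmult_integral_contrapositive; repeat split; try lra.
  all: apply Rmult_lt_0_compat; auto; apply Rinv_0_lt_compat; auto.
Qed.

Lemma deriv_eg u v : admissible u v -> eval (deriv eg) u v = eval edg u v.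
Proof.
  intros [Hu Hv].
  assert (HX := Xf_pos u v).
  assert (Hs : 0 < sqrt (1 + Xf u v)) by (apply sqrt_lt_R0; lra).
  assert (Hq : 0 < sin v * / sin u)
    by (apply Rmult_lt_0_compat; auto; apply Rinv_0_lt_compat; auto).
  unfold Xf in *. unfold edg, ecot, eg, ek, e1X, eX in *; simpl in *.
  rewrite Rpower_minus_1 by auto.
  field. repeat split; lra.
Qed.

Lemma deriv_ek u v : admissible u v -> eval (deriv ek) u v = eval edk u v.
Proof.
  intros [Hu Hv].
  assert (HX := Xf_pos u v).
  assert (Hs : 0 < sqrt (1 + Xf u v)) by (apply sqrt_lt_R0; lra).
  assert (Hss : sqrt (1 + Xf u v) * sqrt (1 + Xf u v) = 1 + Xf u v)
    by (apply sqrt_sqrt; lra).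
  assert (Hq : 0 < sin v * / sin u)
    by (apply Rmult_lt_0_compat; auto; apply Rinv_0_lt_compat; auto).
  unfold Xf in *. unfold edk, ecot, el, ek, e1X, eX in *; simpl in *.
  rewrite Rpower_minus_1 by auto.
  set (S := sqrt (1 + coef * Rpower (sin v * / sin u) expo)) in *.
  set (P := Rpower (sin v * / sin u) expo) in *.
  field_simplify_eq; [|repeat split; lra].
  replace (S ^ 2) with (1 + coef * P) by (rewrite <- Hss; ring). ring.
Qed.

Definition cot x := cos x / sin x.

Definition Phi x := RInt (eval eg x) x (PI / 2).
Definition J x := RInt (eval ek x) x (PI / 2).
Definition L x := RInt (eval el x) x (PI / 2).

Lemma ex_RInt_integrand e x c d : 0 < x < PI / 2 -> x <= c <= d -> d <= PI / 2 ->
  (forall u v, admissible u v -> defined e u v) -> ex_RInt (eval e x) c d.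
Proof.
  intros Hx Hc Hd H. apply ex_RInt_eval. intros t Ht.
  rewrite Rmin_left, Rmax_right in Ht by lra. apply H, admissible_of; lra.
Qed.

Lemma Phi_is_derive x : 0 < x < PI / 2 ->
  is_derive Phi x (- (expo / 2) * cot x * J x - sqrt (1 + coef)).
Proof.
  intros Hx. assert (HPI := PI_RGT_0). assert (Hs : 0 < sin x) by (apply sin_gt_0; lra).
  replace (- (expo / 2) * cot x * J x - sqrt (1 + coef))
    with (RInt (eval edg x) x (PI / 2) - eval eg x x).
  - apply (is_derive_RInt_eval_lower eg edg 0 PI x (PI / 2)); try lra.
    intros u v Hu Hv. assert (Hb := admissible_of u v Hu Hv).
    destruct (integrands_defined u v Hb) as [H1 [_ [_ [H4 _]]]]. auto using deriv_eg.
  - change (eval eg x x) with (sqrt (1 + Xf x x)). rewrite Xf_diag by auto. f_equal.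
    unfold J, cot. rewrite <- (RInt_scal (V := R_CompleteNormedModule)).
    + apply RInt_ext. intros t Ht. unfold edg, ecot; simpl. unfold scal; simpl.
      unfold mult; simpl. unfold Rdiv. ring.
    + apply ex_RInt_integrand; try lra. apply integrands_defined.
Qed.

Lemma J_is_derive x : 0 < x < PI / 2 ->
  is_derive J x (- expo * cot x * L x - coef / sqrt (1 + coef)).
Proof.
  intros Hx. assert (HPI := PI_RGT_0). assert (Hs : 0 < sin x) by (apply sin_gt_0; lra).
  replace (- expo * cot x * L x - coef / sqrt (1 + coef))
    with (RInt (eval edk x) x (PI / 2) - eval ek x x).
  - apply (is_derive_RInt_eval_lower ek edk 0 PI x (PI / 2)); try lra.
    intros u v Hu Hv. assert (Hb := admissible_of u v Hu Hv).
    destruct (integrands_defined u v Hb) as [_ [H2 [_ [_ H5]]]]. auto using deriv_ek.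
  - change (eval ek x x) with (Xf x x / sqrt (1 + Xf x x)). rewrite Xf_diag by auto.
    f_equal. unfold L, cot. rewrite <- (RInt_scal (V := R_CompleteNormedModule)).
    + apply RInt_ext. intros t Ht. unfold edk, ecot; simpl. unfold scal; simpl.
      unfold mult; simpl. unfold Rdiv. ring.
    + apply ex_RInt_integrand; try lra. apply integrands_defined.
Qed.

Lemma r0_pos : 0 < r0.
Proof. apply Rpower_pos. Qed.

Lemma Derive_torr_r z : 0 < z -> Derive (torr_r beta) z = - beta * Rpower z (- beta - 1).
Proof.
  intros Hz. apply is_derive_unique, is_derive_Reals, derivable_pt_lim_power; auto.
Qed.

Lemma torr_slope_term s u : 0 < s -> 0 < u ->
  / Derive (torr_r beta) (torr_zinv beta (r0 * s / u)) ^ 2 = coef * Rpower (u * / s) expo.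
Proof.
  intros Hs Hu. assert (Hr := r0_pos).
  assert (Hsu : 0 < s / u) by (apply Rdiv_lt_0_compat; auto).
  assert (Hrho : 0 < r0 * s / u) by (unfold Rdiv; rewrite Rmult_assoc; now apply Rmult_lt_0_compat).
  unfold torr_zinv. rewrite Derive_torr_r, Rpower_mult by apply Rpower_pos.
  set (e := - / beta * (- beta - 1)).
  assert (He : e + e = expo) by (unfold e, expo; field; lra).
  replace ((- beta * Rpower (r0 * s / u) e) ^ 2) with (beta ^ 2 * Rpower (r0 * s / u) (e + e))
    by (rewrite Rpower_plus; ring).
  rewrite He, Rinv_mult, <- Rpower_Ropp.
  unfold coef. rewrite Rmult_assoc. f_equal.
  replace (u * / s) with (/ (s / u)) by (field; lra).
  rewrite Rpower_inv_base, Rpower_mult_distr by auto.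
  f_equal. unfold Rdiv. ring.
Qed.

(* The rotation integrand in the variable u, for sin φ = s. *)
Definition erot s := ESqrt (EMul (EAdd (ECst 1) (EMul (ECst coef) (EPow (EMul EX (ECst (/ s))) expo)))
   (EInv (EAdd (ECst 1) (EMul (ECst (-1)) (EMul EX EX))))).
Definition rot_integrand s u := eval (erot s) u 0.

Lemma rot_integrand_continuous s u : 0 < s -> 0 < u < 1 -> continuous (rot_integrand s) u.
Proof.
  intros Hs Hu. apply (continuous_fst_of_2d (eval (erot s))), eval_continuous.
  assert (H2 : 0 < 1 + -1 * (u * u)) by nra.
  assert (H3 : 0 < coef * Rpower (u * / s) expo)
    by (apply Rmult_lt_0_compat; [apply coef_pos | apply Rpower_pos]).
  unfold erot; simpl. repeat split; try lra.
  all: apply Rmult_lt_0_compat; [lra | now apply Rinv_0_lt_compat].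
Qed.

Lemma RInt_eg_sin φ θ : 0 < φ -> φ <= θ < PI / 2 ->
  RInt (eval eg φ) φ θ = RInt (rot_integrand (sin φ)) (sin φ) (sin θ).
Proof.
  intros Hφ Hθ.
  rewrite <- (RInt_comp (V := R_CompleteNormedModule) (rot_integrand (sin φ)) sin cos).
  - apply RInt_ext. intros y Hy. rewrite Rmin_left, Rmax_right in Hy by lra.
    assert (Hc : 0 < cos y) by (apply cos_gt_0; lra).
    unfold rot_integrand, erot, eg, e1X, eX; simpl.
    replace (1 + -1 * (sin y * sin y)) with (cos y * cos y)
      by (generalize (sin2_cos2 y); unfold Rsqr; lra).
    rewrite sqrt_div_square; auto.
    + change (scal (cos y) ?v) with (cos y * v). field. lra.
    + generalize (Rpower_pos (sin y * / sin φ) expo) coef_pos. nra.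
  - intros x Hx. rewrite Rmin_left, Rmax_right in Hx by lra.
    apply rot_integrand_continuous; [apply sin_gt_0; lra|].
    split; [apply sin_gt_0 | apply sin_lt_1]; lra.
  - intros x Hx. split; [apply is_derive_sin | apply continuous_cos].
Qed.

Lemma eg_bound φ t : 0 < φ < PI / 2 -> φ <= t <= PI / 2 ->
  0 <= eval eg φ t <= sqrt (1 + coef * Rpower (/ sin φ) expo).
Proof.
  intros Hφ Ht. assert (Hs : 0 < sin φ) by (apply sin_gt_0; lra).
  assert (Hst : 0 < sin t) by (apply sin_gt_0; lra).
  split; [apply sqrt_pos|]. apply sqrt_le_1_alt, Rplus_le_compat_l.
  apply Rmult_le_compat_l; [left; apply coef_pos|].
  apply Rle_Rpower_l; [generalize expo_gt_2; lra|]. split.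
  - apply Rmult_lt_0_compat; auto. now apply Rinv_0_lt_compat.
  - rewrite <- (Rmult_1_l (/ sin φ)) at 2. apply Rmult_le_compat_r.
    + left; now apply Rinv_0_lt_compat.
    + apply SIN_bound.
Qed.

Lemma Phi_tail φ θ : 0 < φ < PI / 2 -> φ <= θ <= PI / 2 ->
  Rabs (RInt (eval eg φ) φ θ - Phi φ)
    <= (PI / 2 - θ) * sqrt (1 + coef * Rpower (/ sin φ) expo).
Proof.
  intros Hφ Hθ.
  assert (Hdef : forall u v, admissible u v -> defined eg u v) by apply integrands_defined.
  unfold Phi.
  rewrite <- (RInt_Chasles (V := R_CompleteNormedModule) _ φ θ (PI / 2))
    by (apply ex_RInt_integrand; auto; lra).
  change (plus ?u ?v) with (u + v).
  destruct (RInt_bounds (eval eg φ) θ (PI / 2) 0 (sqrt (1 + coef * Rpower (/ sin φ) expo)))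
    as [HB1 HB2]; [lra | apply ex_RInt_integrand; auto; lra | |].
  - intros t Ht. apply eg_bound; lra.
  - replace (RInt (eval eg φ) φ θ - (RInt (eval eg φ) φ θ + RInt (eval eg φ) θ (PI / 2)))
      with (- RInt (eval eg φ) θ (PI / 2)) by ring.
    rewrite Rabs_Ropp, Rabs_right; lra.
Qed.

Lemma rot_integral_is_Phi φ : 0 < φ < PI / 2 ->
  is_RInt_gen (rot_integrand (sin φ)) (at_point (sin φ)) (at_left 1) (Phi φ).
Proof.
  intros Hφ. assert (Hs : 0 < sin φ) by (apply sin_gt_0; lra).
  intros P [eps HP]. unfold filtermapi.
  set (G := sqrt (1 + coef * Rpower (/ sin φ) expo)).
  assert (HG : 0 <= G) by apply sqrt_pos.
  set (eta := eps / (G + 1)).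
  assert (Heta : 0 < eta) by (apply Rdiv_lt_0_compat; [apply cond_pos | lra]).
  assert (Hetaeps : eta * (G + 1) = eps) by (unfold eta; field; lra).
  (* all u = sin θ with θ ∈ (θ1, π/2) are within eps of the limit *)
  set (θ1 := Rmax φ (PI / 2 - eta)).
  assert (Hθ1 : φ <= θ1 < PI / 2) by (split; [apply Rmax_l | apply Rmax_lub_lt; lra]).
  assert (Hθ1' : PI / 2 - eta <= θ1) by apply Rmax_r.
  assert (Hsθ1 : 0 < sin θ1 < 1) by (split; [apply sin_gt_0 | apply sin_lt_1]; lra).
  assert (Hd : 0 < 1 - sin θ1) by lra.
  apply (Filter_prod _ _ _ (fun x => x = sin φ) (fun b => sin θ1 < b < 1)).
  - reflexivity.
  - exists (mkposreal _ Hd). intros b Hb Hlt. change (Rabs (b - 1) < 1 - sin θ1) in Hb.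
    apply Rabs_def2 in Hb. lra.
  - intros x y -> Hy. simpl.
    assert (Hasb := asin_bound_lt y ltac:(lra)).
    assert (Has : θ1 < asin y).
    { destruct (Rlt_or_le θ1 (asin y)) as [H|H]; auto.
      assert (sin (asin y) <= sin θ1) by (apply sin_incr_1; lra).
      rewrite sin_asin in * by lra. lra. }
    exists (RInt (eval eg φ) φ (asin y)). split.
    + assert (sin φ <= sin θ1) by (apply sin_incr_1; lra).
      rewrite RInt_eg_sin, sin_asin by lra.
      apply (RInt_correct (V := R_CompleteNormedModule)), ex_RInt_continuous_R.
      intros z Hz. rewrite Rmin_left, Rmax_right in Hz by lra.
      apply rot_integrand_continuous; auto. lra.
    + apply HP. change (Rabs (RInt (eval eg φ) φ (asin y) - Phi φ) < eps).
      eapply Rle_lt_trans; [apply Phi_tail; lra|]. fold G.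
      apply Rle_lt_trans with (eta * G); [apply Rmult_le_compat_r|]; nra.
Qed.

Definition dtheta := torr_dtheta beta z0.

Lemma dtheta_eq_Phi φ : 0 < φ < PI / 2 -> dtheta φ = 2 * Phi φ.
Proof.
  intros Hφ. assert (Hs : 0 < sin φ) by (apply sin_gt_0; lra).
  unfold dtheta, torr_dtheta, rotation. rewrite sign_eq_1, Rabs_right by lra.
  rewrite Rmult_1_r. f_equal.
  apply (is_RInt_gen_unique (Fa := at_point (sin φ)) (Fb := at_left 1)).
  apply (is_RInt_gen_ext (rot_integrand (sin φ))); [|now apply rot_integral_is_Phi].
  apply (Filter_prod _ _ _ (fun x => x = sin φ) (fun b => 0 < b)).
  - reflexivity.
  - exists (mkposreal 1 Rlt_0_1). intros b Hb _. change (Rabs (b - 1) < 1) in Hb.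
    apply Rabs_def2 in Hb. lra.
  - intros x y -> Hy z Hz. simpl in Hz.
    assert (Hzp : 0 < z).
    { apply Rlt_le_trans with (Rmin (sin φ) y); [apply Rmin_glb_lt|]; lra. }
    change (torr_r beta z0) with r0. rewrite torr_slope_term by auto.
    unfold rot_integrand, erot; simpl. unfold Rdiv. do 3 f_equal. ring.
Qed.

Lemma dtheta_odd x : dtheta (- x) = - dtheta x.
Proof. unfold dtheta, torr_dtheta, rotation. rewrite sin_neg, Rabs_Ropp, sign_opp. ring. Qed.

(* Rescaling [φ, π/2] to [0, 1]:  Φ(φ) = ∫_0^1 (π/2 - φ) g(φ, φ + (π/2 - φ) t) dt,
   an integral with fixed bounds to which [ex_derive_n_RInt_eval] applies. *)
Definition elen := EAdd (ECst (PI / 2)) (EMul (ECst (-1)) EX).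
Definition eP := EMul elen (subst_t eg (EAdd EX (EMul elen ET))).

Lemma eP_defined x t : 0 < x < PI / 2 -> 0 <= t <= 1 -> defined eP x t.
Proof.
  intros Hx Ht. split; [simpl; tauto|].
  apply defined_subst_t; [simpl; tauto|].
  apply integrands_defined, admissible_of; simpl; nra.
Qed.

Lemma Phi_rescaled x : 0 < x < PI / 2 -> Phi x = RInt (eval eP x) 0 1.
Proof.
  intros Hx. unfold Phi.
  replace (RInt (eval eg x) x (PI / 2)) with
    (RInt (eval eg x) ((PI / 2 - x) * 0 + x) ((PI / 2 - x) * 1 + x)) by (f_equal; ring).
  rewrite <- (RInt_comp_lin (V := R_CompleteNormedModule)).
  - apply RInt_ext. intros t Ht. unfold eP.
    change (eval (EMul elen (subst_t eg (EAdd EX (EMul elen ET)))) x t)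
      with (eval elen x t * eval (subst_t eg (EAdd EX (EMul elen ET))) x t).
    rewrite eval_subst_t. change (scal ?k ?v) with (k * v). simpl.
    replace (x + (PI / 2 + -1 * x) * t) with ((PI / 2 - x) * t + x) by ring. ring.
  - replace ((PI / 2 - x) * 0 + x) with x by ring.
    replace ((PI / 2 - x) * 1 + x) with (PI / 2) by ring.
    apply ex_RInt_integrand; try lra. apply integrands_defined.
Qed.

Definition kappa_int x := 2 * RInt (eval (deriv eP) x) 0 1.

Lemma kappa_int_smooth n x : 0 < x < PI / 2 -> ex_derive_n kappa_int n x.
Proof.
  intros Hx. apply ex_derive_n_scal_l.
  apply (ex_derive_n_RInt_eval 0 1 0 (PI / 2)); auto; [lra|].
  intros; apply defined_deriv, eP_defined; auto.
Qed.

Lemma dtheta_is_derive_pos x : 0 < x < PI / 2 -> is_derive dtheta x (kappa_int x).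
Proof.
  intros Hx. apply is_derive_ext_loc with (f := fun z => 2 * RInt (eval eP z) 0 1).
  - generalize (locally_open_interval 0 (PI / 2) x Hx). apply filter_imp.
    intros y Hy. now rewrite dtheta_eq_Phi, Phi_rescaled.
  - apply (is_derive_scal (fun z => RInt (eval eP z) 0 1)).
    apply (is_derive_RInt_eval 0 1 0 (PI / 2)); auto; [lra|].
    intros; apply eP_defined; auto.
Qed.

Lemma dtheta_is_derive_neg x : 0 < x < PI / 2 -> is_derive dtheta (- x) (kappa_int x).
Proof. intros Hx. apply is_derive_odd; [apply dtheta_odd | now apply dtheta_is_derive_pos]. Qed.

Definition kappa := torr_kappa beta z0.
Definition omega := torr_omega beta z0.

Lemma kappa_pos x : 0 < x < PI / 2 -> kappa x = kappa_int x.
Proof. intros; now apply is_derive_unique, dtheta_is_derive_pos. Qed.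

Lemma kappa_even x : 0 < x < PI / 2 -> kappa (- x) = kappa x.
Proof.
  intros Hx. rewrite (kappa_pos x Hx). now apply is_derive_unique, dtheta_is_derive_neg.
Qed.

Lemma omega_even x : 0 < x < PI / 2 -> omega (- x) = omega x.
Proof. intros Hx. unfold omega, torr_omega. fold kappa. now rewrite kappa_even, cos_neg. Qed.

Lemma kappa_formula x : 0 < x < PI / 2 -> kappa x = - expo * cot x * J x - c_lim.
Proof.
  intros Hx.
  assert (H : is_derive dtheta x (2 * (- (expo / 2) * cot x * J x - sqrt (1 + coef)))).
  { apply is_derive_ext_loc with (f := fun z => 2 * Phi z).
    - generalize (locally_open_interval 0 (PI / 2) x Hx). apply filter_imp.
      intros y Hy. symmetry; now apply dtheta_eq_Phi.
    - apply (is_derive_scal Phi), Phi_is_derive; auto. }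
  unfold kappa, torr_kappa. fold dtheta. rewrite (is_derive_unique _ _ _ H).
  unfold c_lim. lra.
Qed.

Lemma kappa_smooth n x : - (PI / 2) < x < PI / 2 -> x <> 0 -> ex_derive_n kappa n x.
Proof.
  intros Hx Hx0. destruct (Rlt_or_le 0 x) as [Hpos|Hneg].
  - apply ex_derive_n_ext_loc with (f := kappa_int).
    + generalize (locally_open_interval 0 (PI / 2) x (conj Hpos (proj2 Hx))).
      apply filter_imp. intros y Hy. symmetry; now apply kappa_pos.
    + apply kappa_int_smooth; lra.
  - apply ex_derive_n_ext_loc with (f := fun y => kappa_int (- y)).
    + generalize (locally_open_interval (- (PI / 2)) 0 x ltac:(lra)). apply filter_imp.
      intros y Hy. rewrite <- (Ropp_involutive y) at 2.
      rewrite kappa_even, kappa_pos by lra. reflexivity.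
    + apply ex_derive_n_comp_opp.
      generalize (locally_open_interval 0 (PI / 2) (- x) ltac:(lra)). apply filter_imp.
      intros y Hy k _. now apply kappa_int_smooth.
Qed.

Lemma dtheta_ex_derive x : - (PI / 2) < x < PI / 2 -> x <> 0 -> ex_derive dtheta x.
Proof.
  intros Hx Hx0. destruct (Rlt_or_le 0 x) as [Hpos|Hneg].
  - eexists; apply dtheta_is_derive_pos; lra.
  - rewrite <- (Ropp_involutive x). eexists; apply dtheta_is_derive_neg; lra.
Qed.

(* κ'(φ) on (0, π/2), from the formula for κ and J' = -expo cot L - coef/sqrt(1+coef). *)
Definition kappa' x :=
  expo * J x / sin x ^ 2 + expo * cot x * (expo * cot x * L x + coef / sqrt (1 + coef)).

Lemma kappa_is_derive x : 0 < x < PI / 2 -> is_derive kappa x (kappa' x).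
Proof.
  intros Hx. assert (Hs : 0 < sin x) by (apply sin_gt_0; lra).
  apply is_derive_ext_loc with (f := fun z => - expo * cot z * J z - c_lim).
  - generalize (locally_open_interval 0 (PI / 2) x Hx). apply filter_imp.
    intros y Hy. symmetry; now apply kappa_formula.
  - assert (Hcot : is_derive cot x (- / sin x ^ 2)).
    { unfold cot. auto_derive; [lra|].
      assert (H2 := sin2_cos2 x). unfold Rsqr in H2. field_simplify_eq; [nra | lra]. }
    assert (Hprod : is_derive (fun z => - expo * cot z * J z) x
      (- expo * (- / sin x ^ 2) * J x
       + - expo * cot x * (- expo * cot x * L x - coef / sqrt (1 + coef)))).
    { apply (is_derive_mult (fun z => - expo * cot z) J).
      - now apply (is_derive_scal cot).
      - now apply J_is_derive.
      - intros; apply Rmult_comm. }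
    replace (kappa' x) with
      (- expo * (- / sin x ^ 2) * J x
       + - expo * cot x * (- expo * cot x * L x - coef / sqrt (1 + coef)) - 0)
      by (unfold kappa', Rdiv; ring).
    apply (is_derive_minus _ (fun _ => c_lim)); auto. auto_derive; auto.
Qed.

Lemma kappa_is_derive_neg x : 0 < x < PI / 2 -> is_derive kappa (- x) (- kappa' x).
Proof.
  intros Hx. apply is_derive_ext_loc with (f := fun z => kappa (- z)).
  - generalize (locally_open_interval (- (PI / 2)) 0 (- x) ltac:(lra)). apply filter_imp.
    intros y Hy. symmetry. rewrite <- (Ropp_involutive y) at 1. apply kappa_even. lra.
  - replace (- kappa' x) with (-1 * kappa' x) by ring.
    apply (is_derive_comp kappa (fun z => - z)).
    + rewrite Ropp_involutive. now apply kappa_is_derive.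
    + auto_derive; auto.
Qed.

(* Q(φ) = (1/sin φ)^expo: the size of X(φ, t) uniformly in t, up to constants. *)
Definition Q x := Rpower (/ sin x) expo.
Definition half_pow := Rpower (/ 2) expo.

Lemma half_pow_bounds : 0 < half_pow <= 1.
Proof.
  split; [apply Rpower_pos|]. rewrite <- (Rpower_base_1 expo).
  apply Rle_Rpower_l; [generalize expo_gt_2|]; lra.
Qed.

Lemma Q_ge x : 0 < sin x -> 1 <= Q x /\ / sin x <= Q x.
Proof.
  intros Hs. assert (H1 : 1 <= / sin x).
  { rewrite <- Rinv_1. apply Rinv_le_contravar; auto. apply SIN_bound. }
  assert (Hp := expo_gt_2). unfold Q. split.
  - rewrite <- (Rpower_O (/ sin x)) at 1 by lra. apply Rle_Rpower; lra.
  - rewrite <- (Rpower_1 (/ sin x)) at 1 by lra. apply Rle_Rpower; lra.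
Qed.

Lemma Xf_le x t : 0 < sin x -> 0 < sin t -> Xf x t <= coef * Q x.
Proof.
  intros Hx Ht. rewrite Xf_eq. apply Rmult_le_compat_l; [left; apply coef_pos|].
  apply Rle_Rpower_l; [generalize expo_gt_2; lra|]. split.
  - apply Rdiv_lt_0_compat; auto.
  - unfold Rdiv. rewrite <- (Rmult_1_l (/ sin x)) at 2.
    apply Rmult_le_compat_r; [left; now apply Rinv_0_lt_compat | apply SIN_bound].
Qed.

Lemma Xf_ge x t : 0 < sin x -> / 2 <= sin t -> coef * half_pow * Q x <= Xf x t.
Proof.
  intros Hx Ht. rewrite Xf_eq. unfold Q, half_pow. rewrite Rmult_assoc.
  apply Rmult_le_compat_l; [left; apply coef_pos|].
  rewrite Rpower_mult_distr by (try apply Rinv_0_lt_compat; lra).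
  apply Rle_Rpower_l; [generalize expo_gt_2; lra|]. split.
  - apply Rmult_lt_0_compat; [lra | now apply Rinv_0_lt_compat].
  - apply Rmult_le_compat_r; [left; now apply Rinv_0_lt_compat | lra].
Qed.

Lemma integrands_upper x t : 0 < sin x -> 0 < sin t ->
  0 <= eval el x t <= sqrt (coef * Q x) /\ 0 <= eval ek x t <= sqrt (coef * Q x).
Proof.
  intros Hsx Hst.
  assert (HX := Xf_pos x t). assert (HXQ := Xf_le x t Hsx Hst).
  destruct (shape_k_bounds (Xf x t) HX) as [Hk1 Hk2].
  destruct (shape_l_le_k (Xf x t) HX) as [Hl1 Hl2].
  assert (sqrt (Xf x t) <= sqrt (coef * Q x)) by (apply sqrt_le_1_alt; lra).
  change (eval el x t) with (Xf x t * (2 + Xf x t) / (2 * (1 + Xf x t) * sqrt (1 + Xf x t))).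
  change (eval ek x t) with (Xf x t / sqrt (1 + Xf x t)). lra.
Qed.

Lemma J_L_upper x : 0 < x < PI / 2 ->
  0 <= L x <= PI / 2 * sqrt (coef * Q x) /\ 0 <= J x <= PI / 2 * sqrt (coef * Q x).
Proof.
  intros Hx. assert (Hsx : 0 < sin x) by (apply sin_gt_0; lra).
  assert (HB : forall t, x < t < PI / 2 ->
    0 <= eval el x t <= sqrt (coef * Q x) /\ 0 <= eval ek x t <= sqrt (coef * Q x)).
  { intros t Ht. apply integrands_upper; auto. apply sin_gt_0; lra. }
  assert (HPI := PI_RGT_0). assert (Hq : 0 <= sqrt (coef * Q x)) by apply sqrt_pos.
  destruct (RInt_bounds (eval el x) x (PI / 2) 0 (sqrt (coef * Q x))) as [L1 L2];
    [lra | apply ex_RInt_integrand; try lra; apply integrands_defined | apply HB |].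
  destruct (RInt_bounds (eval ek x) x (PI / 2) 0 (sqrt (coef * Q x))) as [K1 K2];
    [lra | apply ex_RInt_integrand; try lra; apply integrands_defined | apply HB |].
  unfold L, J. split; split; nra.
Qed.

(* When Q φ is large, J is also bounded below by a multiple of sqrt (Q φ):
   the part of the integral over [π/6, π/2] already suffices. *)
Lemma J_lower x : 0 < x <= PI / 6 -> 1 <= coef * half_pow * Q x ->
  PI / 3 * sqrt (coef * half_pow * Q x / 2) <= J x.
Proof.
  intros Hx HQ. assert (HPI := PI_RGT_0).
  assert (Hsx : 0 < sin x) by (apply sin_gt_0; lra).
  assert (Hdef : forall u v, admissible u v -> defined ek u v) by apply integrands_defined.
  unfold J. rewrite <- (RInt_Chasles (V := R_CompleteNormedModule) _ x (PI / 6) (PI / 2))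
    by (apply ex_RInt_integrand; auto; lra).
  change (plus ?u ?v) with (u + v).
  destruct (RInt_bounds (eval ek x) x (PI / 6) 0 (sqrt (coef * Q x))) as [L1 _];
    [lra | apply ex_RInt_integrand; auto; lra | |].
  { intros t Ht. apply integrands_upper; auto. apply sin_gt_0; lra. }
  destruct (RInt_bounds (eval ek x) (PI / 6) (PI / 2) (sqrt (coef * half_pow * Q x / 2))
              (sqrt (coef * Q x))) as [K1 _];
    [lra | apply ex_RInt_integrand; auto; lra | |].
  { intros t Ht. split; [|apply integrands_upper; auto; apply sin_gt_0; lra].
    apply shape_k_lower. split; auto. apply Xf_ge; auto. apply sin_ge_half; lra. }
  lra.
Qed.

(** ** Item 1: κ ≤ -c_lim < -2 *)

Lemma cot_pos x : 0 < x < PI / 2 -> 0 < cot x.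
Proof.
  intros Hx. apply Rdiv_lt_0_compat; [apply cos_gt_0 | apply sin_gt_0]; lra.
Qed.

Lemma kappa_le_pos x : 0 < x < PI / 2 -> kappa x <= - c_lim.
Proof.
  intros Hx. rewrite kappa_formula by auto. destruct (J_L_upper x Hx) as [_ [HJ _]].
  assert (H := cot_pos x Hx). assert (Hp := expo_gt_2).
  assert (0 <= expo * cot x * J x) by (apply Rmult_le_pos; nra). lra.
Qed.

(* Reduction of statements about κ at φ ≠ 0 to φ > 0, by evenness. *)
Lemma kappa_abs x : 0 < Rabs x < PI / 2 -> kappa x = kappa (Rabs x).
Proof.
  intros Hx. destruct (Rle_or_lt 0 x) as [H|H].
  - now rewrite Rabs_right by lra.
  - rewrite Rabs_left in * by lra. rewrite <- (Ropp_involutive x) at 1.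
    apply kappa_even; auto.
Qed.

Lemma kappa_le x : - (PI / 2) < x < PI / 2 -> x <> 0 -> kappa x <= - c_lim.
Proof.
  intros Hx Hx0. assert (Ha : 0 < Rabs x < PI / 2).
  { split; [now apply Rabs_pos_lt | apply Rabs_def1; lra]. }
  rewrite kappa_abs by auto. apply kappa_le_pos; auto.
Qed.

Lemma omega_neg x : - (PI / 2) < x < PI / 2 -> x <> 0 -> omega x < 0.
Proof.
  intros Hx Hx0. unfold omega, torr_omega. fold kappa.
  generalize (kappa_le x Hx Hx0) c_lim_gt_2. intros.
  apply Rdiv_neg_pos; [lra | apply cos_gt_0; lra].
Qed.

(** ** Behaviour near φ = 0 *)

(* On (0, δ₀] the lower bound [J_lower] applies and cot φ ≥ 1. *)
Definition delta0 := Rmin (PI / 6) (coef * half_pow).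
Definition J0 := PI / 3 * sqrt (/ 2).

Lemma delta0_pos : 0 < delta0.
Proof.
  apply Rmin_pos; [generalize PI_RGT_0; lra|].
  apply Rmult_lt_0_compat; [apply coef_pos | apply half_pow_bounds].
Qed.

Lemma J0_pos : 0 < J0.
Proof. apply Rmult_lt_0_compat; [generalize PI_RGT_0; lra | apply sqrt_lt_R0; lra]. Qed.

Lemma small_angle_facts x : 0 < x <= delta0 ->
  1 <= coef * half_pow * Q x /\ 1 <= cot x /\ / 2 <= cos x /\ 0 < sin x <= x /\ x <= PI / 6.
Proof.
  intros Hx. assert (HPI := PI_4).
  assert (Hx1 : x <= PI / 6) by (generalize (Rmin_l (PI / 6) (coef * half_pow)); fold delta0; lra).
  assert (Hx2 : x <= coef * half_pow)
    by (generalize (Rmin_r (PI / 6) (coef * half_pow)); fold delta0; lra).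
  assert (Hs : 0 < sin x) by (apply sin_gt_0; lra).
  assert (Hsx : sin x < x) by (apply sin_lt_x; lra).
  assert (Hc : 0 < cos x) by (apply cos_gt_0; lra).
  assert (H2 := sin2_cos2 x). unfold Rsqr in H2.
  assert (Hss : sin x * sin x <= 4 / 9) by nra.
  split; [|split; [|split]]; try (split; lra).
  - destruct (Q_ge x Hs) as [_ HQ].
    assert (Had : 0 < coef * half_pow)
      by (apply Rmult_lt_0_compat; [apply coef_pos | apply half_pow_bounds]).
    apply Rle_trans with (coef * half_pow * / sin x); [|apply Rmult_le_compat_l; lra].
    apply Rmult_le_reg_r with (sin x); auto. rewrite Rmult_assoc, Rinv_l by lra. nra.
  - unfold cot. apply Rmult_le_reg_r with (sin x); auto. unfold Rdiv.
    rewrite Rmult_assoc, Rinv_l by lra. nra.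
  - nra.
Qed.

Lemma J_ge_J0 x : 0 < x <= delta0 -> J0 <= J x.
Proof.
  intros Hx. destruct (small_angle_facts x Hx) as [H1 [_ [_ [_ H5]]]].
  apply Rle_trans with (PI / 3 * sqrt (coef * half_pow * Q x / 2)).
  - apply Rmult_le_compat_l; [generalize PI_RGT_0; lra|]. apply sqrt_le_1_alt. lra.
  - apply J_lower; lra.
Qed.

Lemma kappa_small x : 0 < x <= delta0 -> kappa x <= - (expo * J0 / 2) / x.
Proof.
  intros Hx. destruct (small_angle_facts x Hx) as [_ [_ [H3 [H4 H5]]]].
  assert (HPI := PI_RGT_0).
  rewrite kappa_formula by lra. assert (HJ := J_ge_J0 x Hx). assert (HJ0 := J0_pos).
  assert (Hp := expo_gt_2). assert (Hc := c_lim_gt_2).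
  assert (Hcot : / 2 / x <= cot x).
  { unfold cot, Rdiv. apply Rmult_le_compat; try lra.
    - left; apply Rinv_0_lt_compat; lra.
    - apply Rinv_le_contravar; lra. }
  assert (H0x : 0 <= / 2 / x) by (apply Rdiv_le_0_compat; lra).
  assert (J0 * (/ 2 / x) <= J x * cot x) by (apply Rmult_le_compat; lra).
  replace (- (expo * J0 / 2) / x) with (- (expo * (J0 * (/ 2 / x)))) by (field; lra).
  nra.
Qed.

Lemma kappa_to_minus_infty : is_lim kappa 0 m_infty.
Proof.
  intros P [M HM]. simpl.
  set (K := expo * J0 / 2).
  assert (HK : 0 < K).
  { apply Rdiv_lt_0_compat; [|lra].
    apply Rmult_lt_0_compat; [generalize expo_gt_2; lra | apply J0_pos]. }
  assert (HM1 : 0 < Rabs M + 1) by (generalize (Rabs_pos M); lra).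
  assert (Hd : 0 < Rmin delta0 (K / (Rabs M + 1)))
    by (apply Rmin_pos; [apply delta0_pos | now apply Rdiv_lt_0_compat]).
  exists (mkposreal _ Hd). intros x Hx Hx0. change (Rabs (x - 0) < Rmin delta0 (K / (Rabs M + 1))) in Hx.
  rewrite Rminus_0_r in Hx.
  assert (Hx1 := Rmin_l delta0 (K / (Rabs M + 1))).
  assert (Hx2 := Rmin_r delta0 (K / (Rabs M + 1))).
  assert (Hax : 0 < Rabs x) by now apply Rabs_pos_lt.
  assert (H6 : delta0 <= PI / 6) by apply Rmin_l.
  apply HM. rewrite kappa_abs by (generalize PI_RGT_0; lra).
  apply Rle_lt_trans with (- K / Rabs x); [apply kappa_small; lra|].
  assert (Hlt : Rabs x * (Rabs M + 1) < K).
  { apply Rlt_le_trans with (K / (Rabs M + 1) * (Rabs M + 1)).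
    - apply Rmult_lt_compat_r; lra.
    - right; field; lra. }
  assert (Rabs M + 1 < K / Rabs x).
  { apply Rmult_lt_reg_r with (Rabs x); auto. unfold Rdiv. rewrite Rmult_assoc, Rinv_l; lra. }
  generalize (Rle_abs (- M)). rewrite Rabs_Ropp. unfold Rdiv in *. lra.
Qed.

(** ** Behaviour near φ = ±π/2 *)

(* Away from 0, J is bounded, and cot φ ≤ 2 (π/2 - φ): κ + c_lim = O(π/2 - φ). *)
Definition edge_const := expo * 2 * (PI / 2) * sqrt (coef * Rpower 2 expo).

Lemma kappa_near_edge x : PI / 6 <= x < PI / 2 ->
  Rabs (kappa x + c_lim) <= edge_const * (PI / 2 - x).
Proof.
  intros Hx. assert (HPI := PI_RGT_0). assert (Hx' : 0 < x < PI / 2) by lra.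
  assert (Hp := expo_gt_2).
  assert (Hs2 : / 2 <= sin x) by (apply sin_ge_half; lra).
  assert (Hc : 0 < cos x) by (apply cos_gt_0; lra).
  assert (Hcx : cos x <= PI / 2 - x).
  { rewrite <- sin_shift. destruct (Rlt_or_le 0 (PI / 2 - x)); [|lra].
    left; now apply sin_lt_x. }
  assert (Hcot : 0 <= cot x <= 2 * (PI / 2 - x)).
  { split; [left; now apply cot_pos|].
    unfold cot. apply Rmult_le_reg_r with (sin x); [lra|].
    unfold Rdiv. rewrite Rmult_assoc, Rinv_l by lra. nra. }
  assert (HJ : 0 <= J x <= PI / 2 * sqrt (coef * Rpower 2 expo)).
  { destruct (J_L_upper x Hx') as [_ [HJ1 HJ2]]. split; auto.
    apply Rle_trans with (PI / 2 * sqrt (coef * Q x)); auto.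
    apply Rmult_le_compat_l; [lra|]. apply sqrt_le_1_alt.
    apply Rmult_le_compat_l; [left; apply coef_pos|].
    apply Rle_Rpower_l; [lra|]. split; [apply Rinv_0_lt_compat; lra|].
    replace 2 with (/ / 2) by field. apply Rinv_le_contravar; lra. }
  rewrite kappa_formula by auto.
  replace (- expo * cot x * J x - c_lim + c_lim) with (- (expo * (cot x * J x))) by ring.
  rewrite Rabs_Ropp, Rabs_right by (apply Rle_ge, Rmult_le_pos; nra).
  replace (edge_const * (PI / 2 - x))
    with (expo * (2 * (PI / 2 - x) * (PI / 2 * sqrt (coef * Rpower 2 expo))))
    by (unfold edge_const; ring).
  apply Rmult_le_compat_l; [lra|]. apply Rmult_le_compat; lra.
Qed.

Lemma kappa_close_to_edge (eps : posreal) :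
  exists delta : posreal, delta <= PI / 2 /\
    forall x, PI / 2 - delta < Rabs x < PI / 2 -> Rabs (kappa x - - c_lim) < eps.
Proof.
  assert (HPI := PI_RGT_0).
  assert (HB : 0 <= edge_const).
  { unfold edge_const. generalize expo_gt_2; intro.
    apply Rmult_le_pos; [|apply sqrt_pos]. apply Rmult_le_pos; lra. }
  assert (Hpos : 0 < eps / (edge_const + 1)) by (apply Rdiv_lt_0_compat; [apply cond_pos | lra]).
  assert (Hd : 0 < Rmin (PI / 2 - PI / 6) (eps / (edge_const + 1))) by (apply Rmin_pos; lra).
  assert (Hx1 := Rmin_l (PI / 2 - PI / 6) (eps / (edge_const + 1))).
  assert (Hx2 := Rmin_r (PI / 2 - PI / 6) (eps / (edge_const + 1))).
  exists (mkposreal _ Hd). simpl. split; [lra|]. intros x Hx.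
  rewrite kappa_abs by lra.
  replace (kappa (Rabs x) - - c_lim) with (kappa (Rabs x) + c_lim) by ring.
  apply Rle_lt_trans with (edge_const * (PI / 2 - Rabs x)); [apply kappa_near_edge; lra|].
  apply Rle_lt_trans with (edge_const * (eps / (edge_const + 1))).
  - apply Rmult_le_compat_l; lra.
  - replace (edge_const * (eps / (edge_const + 1))) with (eps - eps / (edge_const + 1))
      by (field; lra). lra.
Qed.

Lemma kappa_lim_right_end : filterlim kappa (at_left (PI / 2)) (locally (- c_lim)).
Proof.
  apply filterlim_locally. intros eps.
  destruct (kappa_close_to_edge eps) as [delta [Hdelta Hclose]].
  exists delta. intros x Hx Hlt. change (Rabs (x - PI / 2) < delta) in Hx.
  apply Rabs_def2 in Hx. apply Hclose. rewrite Rabs_right; lra.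
Qed.

Lemma kappa_lim_left_end : filterlim kappa (at_right (- (PI / 2))) (locally (- c_lim)).
Proof.
  apply filterlim_locally. intros eps.
  destruct (kappa_close_to_edge eps) as [delta [Hdelta Hclose]].
  exists delta. intros x Hx Hlt. change (Rabs (x - - (PI / 2)) < delta) in Hx.
  apply Rabs_def2 in Hx. apply Hclose. rewrite Rabs_left; lra.
Qed.

(** ** Item 3: |κ'| = O(|2 + κ|^3) near 0 *)

Lemma inv_sin2_cot x : 0 < sin x -> / sin x ^ 2 = 1 + cot x ^ 2.
Proof.
  intros Hs. unfold cot. assert (H := sin2_cos2 x). unfold Rsqr in H.
  field_simplify_eq; [nra | lra].
Qed.

Lemma kappa'_ge x : 0 < x < PI / 2 -> 0 <= expo * J x / sin x ^ 2 <= kappa' x.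
Proof.
  intros Hx. destruct (J_L_upper x Hx) as [[HL _] [HJ _]].
  assert (HT := cot_pos x Hx). assert (Hp := expo_gt_2).
  assert (Hs : 0 < sin x) by (apply sin_gt_0; lra).
  assert (0 <= coef / sqrt (1 + coef)).
  { apply Rdiv_le_0_compat; [left; apply coef_pos|]. apply sqrt_lt_R0.
    generalize coef_pos; lra. }
  assert (0 <= expo * cot x * (expo * cot x * L x + coef / sqrt (1 + coef))).
  { apply Rmult_le_pos; [nra|]. apply Rplus_le_le_0_compat; auto. apply Rmult_le_pos; nra. }
  split; [apply Rdiv_le_0_compat; nra|]. unfold kappa'. lra.
Qed.

(* In the small-angle region, with T = cot φ and m = sqrt (coef Q φ) ≥ 1,
   we have J ≍ m, so κ' = O(T² m) while |2 + κ|³ ≥ (expo T J)³ ≳ T³ m. *)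
Definition C_up := expo * PI + expo ^ 2 * PI / 2 + expo * coef.
Definition C_low := (expo * J0) ^ 2 * (expo * (PI / 3) * sqrt (half_pow / 2)).

Lemma sqrt_coefQ_ge_1 x : 0 < x <= delta0 -> 1 <= sqrt (coef * Q x).
Proof.
  intros Hx. destruct (small_angle_facts x Hx) as [H1 [_ [_ [Hs _]]]].
  assert (Hh := half_pow_bounds). assert (Hc := coef_pos).
  assert (HQ : 1 <= Q x) by (apply Q_ge; lra).
  rewrite <- sqrt_1. apply sqrt_le_1_alt.
  apply Rle_trans with (coef * half_pow * Q x); auto.
  rewrite Rmult_assoc, (Rmult_comm half_pow), <- Rmult_assoc.
  rewrite <- (Rmult_1_r (coef * Q x)) at 2. apply Rmult_le_compat_l; [|lra].
  apply Rmult_le_pos; lra.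
Qed.

Lemma kappa'_upper x : 0 < x <= delta0 ->
  kappa' x <= C_up * (cot x ^ 2 * sqrt (coef * Q x)).
Proof.
  intros Hx. destruct (small_angle_facts x Hx) as [_ [HT [_ [Hs H6]]]].
  assert (HPI := PI_RGT_0). assert (Hx' : 0 < x < PI / 2) by lra.
  assert (Hp := expo_gt_2). assert (Ha := coef_pos).
  destruct (J_L_upper x Hx') as [[HL1 HL2] [HJ1 HJ2]].
  assert (Hm := sqrt_coefQ_ge_1 x Hx).
  assert (Hsa : 0 <= coef / sqrt (1 + coef) <= coef).
  { assert (Hs1 : 1 <= sqrt (1 + coef))
      by (rewrite <- sqrt_1 at 1; apply sqrt_le_1_alt; lra).
    split; [apply Rdiv_le_0_compat; lra|].
    apply Rmult_le_reg_r with (sqrt (1 + coef)); [lra|].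
    unfold Rdiv. rewrite Rmult_assoc, Rinv_l by lra. nra. }
  set (T := cot x) in *. set (m := sqrt (coef * Q x)) in *.
  unfold kappa'. unfold Rdiv at 1. rewrite Rmult_assoc, inv_sin2_cot by lra. fold T.
  assert (expo * (J x * (1 + T ^ 2)) <= expo * PI * (T ^ 2 * m)).
  { assert (J x * (1 + T ^ 2) <= PI / 2 * m * (2 * T ^ 2)) by (apply Rmult_le_compat; nra).
    nra. }
  assert (expo * T * (expo * T * L x) <= expo ^ 2 * PI / 2 * (T ^ 2 * m)).
  { replace (expo * T * (expo * T * L x)) with (expo ^ 2 * T ^ 2 * L x) by ring.
    replace (expo ^ 2 * PI / 2 * (T ^ 2 * m)) with (expo ^ 2 * T ^ 2 * (PI / 2 * m)) by field.
    apply Rmult_le_compat_l; nra. }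
  assert (expo * T * (coef / sqrt (1 + coef)) <= expo * coef * (T ^ 2 * m)).
  { assert (T <= T ^ 2 * m) by nra.
    assert (coef / sqrt (1 + coef) * T <= coef * (T ^ 2 * m)) by (apply Rmult_le_compat; nra).
    nra. }
  unfold C_up. nra.
Qed.

Lemma C_low_pos : 0 < C_low.
Proof.
  assert (HPI := PI_RGT_0). assert (Hp := expo_gt_2). assert (Hh := half_pow_bounds).
  unfold C_low. apply Rmult_lt_0_compat.
  - apply pow_lt, Rmult_lt_0_compat; [lra | apply J0_pos].
  - apply Rmult_lt_0_compat; [apply Rmult_lt_0_compat; lra | apply sqrt_lt_R0; lra].
Qed.

Lemma two_plus_kappa_cubed_lower x : 0 < x <= delta0 ->
  C_low * (cot x ^ 2 * sqrt (coef * Q x)) <= Rabs (2 + kappa x) ^ 3.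
Proof.
  intros Hx. destruct (small_angle_facts x Hx) as [H1 [HT [_ [Hs H6]]]].
  assert (HPI := PI_RGT_0). assert (Hx' : 0 < x < PI / 2) by lra.
  assert (Hp := expo_gt_2). assert (Hh := half_pow_bounds). assert (Ha := coef_pos).
  assert (Hm := sqrt_coefQ_ge_1 x Hx).
  assert (HJ0 := J0_pos). assert (HJJ0 := J_ge_J0 x Hx).
  assert (Hsq : 0 < sqrt (half_pow / 2)) by (apply sqrt_lt_R0; lra).
  assert (HJm : PI / 3 * sqrt (half_pow / 2) * sqrt (coef * Q x) <= J x).
  { apply Rle_trans with (PI / 3 * sqrt (coef * half_pow * Q x / 2)); [|apply J_lower; lra].
    rewrite Rmult_assoc, <- sqrt_mult_alt by lra. right. do 2 f_equal. field. }
  set (T := cot x) in *. set (m := sqrt (coef * Q x)) in *.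
  assert (HA : expo * T * J x <= Rabs (2 + kappa x)).
  { rewrite kappa_formula by auto. fold T. assert (Hc := c_lim_gt_2).
    assert (0 <= expo * T * J x) by (apply Rmult_le_pos; nra).
    rewrite Rabs_left; lra. }
  assert (HTJ : 0 <= expo * T * J x) by (apply Rmult_le_pos; nra).
  apply Rle_trans with ((expo * T * J x) ^ 3); [|apply pow_incr; lra].
  assert (Hlow1 : 0 <= expo * J0 * T <= expo * T * J x)
    by (split; [|replace (expo * J0 * T) with (expo * T * J0) by ring;
                  apply Rmult_le_compat_l]; nra).
  assert (Hlow2 : 0 <= expo * (PI / 3) * sqrt (half_pow / 2) * m * T <= expo * T * J x).
  { split; [apply Rmult_le_pos; [|lra]; apply Rmult_le_pos; [|lra];
            apply Rmult_le_pos; [|lra]; apply Rmult_le_pos; lra|].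
    replace (expo * (PI / 3) * sqrt (half_pow / 2) * m * T)
      with (expo * T * (PI / 3 * sqrt (half_pow / 2) * m)) by ring.
    apply Rmult_le_compat_l; nra. }
  assert (HT3 : T ^ 2 * m <= T ^ 3 * m).
  { replace (T ^ 3 * m) with (T ^ 2 * m + T ^ 2 * m * (T - 1)) by ring.
    assert (0 <= T ^ 2 * m * (T - 1)) by (apply Rmult_le_pos; [apply Rmult_le_pos|]; nra).
    lra. }
  assert (HC := C_low_pos).
  apply Rle_trans with (C_low * (T ^ 3 * m)); [apply Rmult_le_compat_l; lra|].
  apply Rle_trans with ((expo * J0 * T) ^ 2 * (expo * (PI / 3) * sqrt (half_pow / 2) * m * T)).
  - right. unfold C_low. ring.
  - replace ((expo * T * J x) ^ 3) with ((expo * T * J x) ^ 2 * (expo * T * J x)) by ring.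
    apply Rmult_le_compat; try lra; [apply pow_le; lra | apply pow_incr; lra].
Qed.

Lemma kappa'_cubic x : 0 < x <= delta0 ->
  0 <= kappa' x <= C_up / C_low * Rabs (2 + kappa x) ^ 3.
Proof.
  intros Hx. assert (HPI := PI_RGT_0).
  assert (H6 : delta0 <= PI / 6) by apply Rmin_l.
  assert (Hk := kappa'_ge x ltac:(lra)). assert (HC := C_low_pos).
  assert (Hup := kappa'_upper x Hx). assert (Hlow := two_plus_kappa_cubed_lower x Hx).
  assert (HCup : 0 <= C_up).
  { unfold C_up. generalize expo_gt_2 coef_pos. intros. nra. }
  split; [lra|].
  apply Rle_trans with (C_up * (cot x ^ 2 * sqrt (coef * Q x))); auto.
  replace (C_up * (cot x ^ 2 * sqrt (coef * Q x)))
    with (C_up / C_low * (C_low * (cot x ^ 2 * sqrt (coef * Q x)))) by (field; lra).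
  apply Rmult_le_compat_l; [apply Rdiv_le_0_compat|]; lra.
Qed.

Lemma Derive_kappa_cubic : exists C delta, 0 < delta /\
  forall x, 0 < Rabs x < delta -> Rabs (Derive kappa x) <= C * Rabs (2 + kappa x) ^ 3.
Proof.
  assert (HPI := PI_RGT_0). assert (H6 : delta0 <= PI / 6) by apply Rmin_l.
  exists (C_up / C_low), delta0. split; [apply delta0_pos|]. intros x Hx.
  destruct (kappa'_cubic (Rabs x)) as [H1 H2]; [lra|].
  rewrite (kappa_abs x) by lra.
  destruct (Rle_or_lt 0 x) as [Hpos|Hneg].
  - rewrite (Rabs_right x) in * by lra.
    rewrite (is_derive_unique _ _ _ (kappa_is_derive x ltac:(lra))), Rabs_right; lra.
  - rewrite (Rabs_left x) in * by lra.
    assert (HD := kappa_is_derive_neg (- x) ltac:(lra)). rewrite Ropp_involutive in HD.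
    rewrite (is_derive_unique _ _ _ HD), Rabs_Ropp, Rabs_right; lra.
Qed.

(** ** Item 4: ω is monotone near 0 *)

Definition omega' x := (kappa' x * cos x - (2 + kappa x) * (- sin x)) / cos x ^ 2.

Lemma omega_is_derive x : 0 < x < PI / 2 -> is_derive omega x (omega' x).
Proof.
  intros Hx. unfold omega, torr_omega, omega'. fold kappa.
  apply (is_derive_div (fun y => 2 + kappa y) cos).
  - replace (kappa' x) with (0 + kappa' x) by ring.
    apply (is_derive_plus (fun _ => 2) kappa); [auto_derive; auto | now apply kappa_is_derive].
  - apply is_derive_cos.
  - apply Rgt_not_eq, cos_gt_0; lra.
Qed.

(* Near 0 the term κ' cos φ ≥ expo J cos φ / sin² φ dominates the bounded
   negative contribution (2 + κ) sin φ = -expo J cos φ - (c_lim - 2) sin φ. *)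
Definition eps_mono := Rmin delta0 (expo * J0 / (16 * (c_lim - 2))).

Lemma eps_mono_pos : 0 < eps_mono.
Proof.
  apply Rmin_pos; [apply delta0_pos|]. apply Rdiv_lt_0_compat.
  - apply Rmult_lt_0_compat; [generalize expo_gt_2; lra | apply J0_pos].
  - generalize c_lim_gt_2; lra.
Qed.

Lemma omega'_pos x : 0 < x <= eps_mono -> 0 < omega' x.
Proof.
  intros Hx.
  assert (HxdS : 0 < x <= delta0)
    by (generalize (Rmin_l delta0 (expo * J0 / (16 * (c_lim - 2)))); fold eps_mono; lra).
  assert (Hxe : x <= expo * J0 / (16 * (c_lim - 2)))
    by (generalize (Rmin_r delta0 (expo * J0 / (16 * (c_lim - 2)))); fold eps_mono; lra).
  destruct (small_angle_facts x HxdS) as [_ [H2 [H3 [H4 H5]]]].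
  assert (HPI := PI_RGT_0). assert (Hx' : 0 < x < PI / 2) by lra.
  assert (Hc : 0 < cos x) by lra. assert (Hs : 0 < sin x) by lra.
  assert (Hp := expo_gt_2). assert (Hcc := c_lim_gt_2). assert (HJ0 := J0_pos).
  assert (HJ := J_ge_J0 x HxdS).
  destruct (kappa'_ge x Hx') as [_ Hk].
  unfold omega'. apply Rdiv_lt_0_compat; [|apply pow_lt; lra].
  rewrite kappa_formula by auto.
  assert (HT : cot x * sin x = cos x) by (unfold cot; field; lra).
  replace ((2 + (- expo * cot x * J x - c_lim)) * - sin x)
    with (expo * J x * cos x + (c_lim - 2) * sin x) by (rewrite <- HT; ring).
  assert (A1 : expo * J x * cos x * (1 + cot x ^ 2) <= kappa' x * cos x).
  { rewrite <- inv_sin2_cot by auto.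
    replace (expo * J x * cos x * / sin x ^ 2) with (expo * J x / sin x ^ 2 * cos x)
      by (unfold Rdiv; ring).
    apply Rmult_le_compat_r; lra. }
  assert (A2 : expo * J0 * / 2 <= expo * J x * cos x * cot x ^ 2).
  { assert (1 <= cot x ^ 2) by nra.
    assert (J0 * / 2 <= J x * cos x) by (apply Rmult_le_compat; lra).
    assert (J0 * / 2 <= J x * cos x * cot x ^ 2) by nra. nra. }
  assert (A3 : (c_lim - 2) * sin x <= expo * J0 / 16).
  { apply Rle_trans with ((c_lim - 2) * (expo * J0 / (16 * (c_lim - 2)))).
    - apply Rmult_le_compat_l; lra.
    - right; field; lra. }
  nra.
Qed.

Lemma omega_increasing x y : 0 < x -> x <= y -> y <= eps_mono -> omega x <= omega y.
Proof.
  intros Hx Hxy Hy. destruct Hxy as [Hxy|<-]; [|lra]. left.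
  assert (Hd : eps_mono <= delta0) by apply Rmin_l.
  assert (H6 : delta0 <= PI / 6) by apply Rmin_l.
  assert (HPI := PI_RGT_0).
  apply (incr_function_le omega x eps_mono omega'); simpl; try lra.
  - intros t Ht1 Ht2. apply omega_is_derive. lra.
  - intros t Ht1 Ht2. apply omega'_pos. lra.
Qed.

(* By evenness, ω decreases on [-eps_mono, 0) and increases on (0, eps_mono]. *)
Lemma omega_monotone_near_0 : exists eps, 0 < eps /\
  (forall x y, - eps <= x -> x <= y -> y < 0 -> omega y <= omega x) /\
  (forall x y, 0 < x -> x <= y -> y <= eps -> omega x <= omega y).
Proof.
  assert (HPI := PI_RGT_0).
  assert (He : eps_mono <= PI / 6).
  { apply Rle_trans with delta0; apply Rmin_l. }
  exists eps_mono. split; [apply eps_mono_pos|]. split.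
  - intros x y Hx Hxy Hy.
    assert (Hsym : forall z, - eps_mono <= z < 0 -> omega z = omega (- z)).
    { intros z Hz. rewrite <- (omega_even (- z)) by lra. now rewrite Ropp_involutive. }
    rewrite (Hsym x), (Hsym y) by lra. apply omega_increasing; lra.
  - exact omega_increasing.
Qed.

End Torricelli.

Theorem mainTheorem9 (beta z0 : R) (hbeta : 0 < beta) (hz0 : 0 < z0) :
  let r0 := torr_r beta z0 in
  let dth := torr_dtheta beta z0 in
  let kappa := torr_kappa beta z0 in
  let omega := torr_omega beta z0 in
  let c := 2 * sqrt (1 + / beta ^ 2 * Rpower r0 (- (2 * (1 + beta) / beta))) in
  (* 1. *)
  ((forall phi, - (PI / 2) < phi < PI / 2 -> phi <> 0 ->
      ex_derive dth phi /\ (forall n : nat, ex_derive_n kappa n phi)) /\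
   (forall phi, - (PI / 2) < phi < PI / 2 -> phi <> 0 ->
      kappa phi <= - c /\ - c < -2 /\ ~ (-2 <= kappa phi <= 0) /\ omega phi < 0)) /\
  (* 2. *)
  (is_lim kappa 0 m_infty /\
   filterlim kappa (at_left (PI / 2)) (locally (- c)) /\
   filterlim kappa (at_right (- (PI / 2))) (locally (- c))) /\
  (* 3. *)
  (exists C delta, 0 < delta /\
     forall phi, 0 < Rabs phi < delta ->
       Rabs (Derive kappa phi) <= C * Rabs (2 + kappa phi) ^ 3) /\
  (* 4. *)
  (exists eps, 0 < eps /\
     ((forall x y, - eps <= x -> x <= y -> y < 0 -> omega x <= omega y) \/
      (forall x y, - eps <= x -> x <= y -> y < 0 -> omega y <= omega x)) /\
     ((forall x y, 0 < x -> x <= y -> y <= eps -> omega x <= omega y) \/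
      (forall x y, 0 < x -> x <= y -> y <= eps -> omega y <= omega x))).
Proof.
  intros r0 dth k w c.
  change c with (c_lim beta z0). change k with (kappa beta z0).
  change w with (omega beta z0). change dth with (dtheta beta z0).
  clear r0 dth k w c.
  assert (Hc := c_lim_gt_2 beta z0 hbeta).
  split; [split | split; [split; [|split] | split]].
  - intros phi Hphi Hne. split.
    + now apply dtheta_ex_derive.
    + intros n. now apply kappa_smooth.
  - intros phi Hphi Hne. assert (Hk := kappa_le beta z0 hbeta phi Hphi Hne).
    repeat split; try lra. now apply omega_neg.
  - now apply kappa_to_minus_infty.
  - now apply kappa_lim_right_end.
  - now apply kappa_lim_left_end.
  - now apply Derive_kappa_cubic.
  - destruct (omega_monotone_near_0 beta z0 hbeta) as [eps [He [Hneg Hpos]]].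
    exists eps. auto.
Qed.
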